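(* Consider the following continuous-time Markov decision process (the bandit process of a self-shared ride-sharing service). Fix parameters $\lambda>0$ (arrival rate), $\mu>0$ (reneging rate), $R>0$ (reward for serving a pair), $\bar R>0$ (reward for a non-shared service) and $C\ge 0$ (reneging penalty), and write $X:=\bar R-C$. The state space is $\{0,1\}$ (number of waiting customers) and in each state an action $a\in\{0,1\}$ is chosen. Under action $a$: in state $0$ the process jumps to state $1$ at rate $a\lambda$ and earns reward rate $0$; in state $1$ the process jumps to state $0$ at total rate $a\lambda+\mu$ and earns reward rate $Ra\lambda+X\mu$ (a pair is served at rate $a\lambda$, earning $R$ per pair; the waiting customer reneges at rate $\mu$, earning $X$). For $\eta\in\mathbb{R}$, the $\eta$-process is the same process in which the reward rate in state $n$ under action $a$ is additionally reduced by $\eta a$. The Whittle index $\eta(n)$ of state $n\in\{0,1\}$ is a value of $\eta$ at which there exist two stationary deterministic policies maximizing the long-run average reward of the $\eta$-process, one taking action $1$ and the other taking action $0$ in state $n$; and the process is Whittle indexable if, for each state $n$, action $1$ in state $n$ is optimal for all $\eta<\eta(n)$ and action $0$ is optimal for all $\eta>\eta(n)$. Then the process is Whittle indexable and its Whittle indices are as follows. If $R<2X$, then $$\eta(0)=\lambda X,\qquad \eta(1)=\frac{\lambda}{2\lambda+\mu}\bigl((\lambda+\mu)R-\mu X\bigr);$$ otherwise (if $R\ge 2X$), $$\eta(0)=\eta(1)=\frac{\lambda}{2\lambda+\mu}\bigl(\lambda R+\mu X\bigr).$$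
   Context: This models a ride-sharing service in which two customers of the same type can share one vehicle: an arriving customer assigned to the service (action $1$) either waits (if nobody is waiting) or departs together with the single waiting customer (if one is waiting); a waiting customer becomes impatient after an exponential time of rate $\mu$ and leaves for a non-shared service, which yields reward $\bar R$ minus penalty $C$. Long-run average reward means $\lim_{T\to\infty}\frac1T\mathbb{E}\int_0^T(\text{reward rate})\,dt$. *)

From Stdlib Require Import Reals Arith Factorial.
From Coquelicot Require Import Coquelicot.
Open Scope R_scope.

(* States: false = 0 waiting customers, true = 1 waiting customer.
   Actions: false = action 0, true = action 1. *)
Definition b2r (b : bool) : R := if b then 1 else 0.

Definition policy := bool -> bool.

Definition gen (lam mu : R) (pol : policy) (i j : bool) : R :=
  let out := if i then b2r (pol true) * lam + mu else b2r (pol false) * lam in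
  if Bool.eqb i j then - out else out.

(* Reward rate of the eta-process in state i under policy [pol]
   (Rs = reward per served pair, X = Rbar - C). *)
Definition rew (lam mu Rs X eta : R) (pol : policy) (i : bool) : R :=
  if i then Rs * b2r (pol true) * lam + X * mu - eta * b2r (pol true)
  else 0 - eta * b2r (pol false).

Fixpoint genpow (lam mu : R) (pol : policy) (k : nat) (i j : bool) : R :=
  match k with
  | O => if Bool.eqb i j then 1 else 0
  | S k' => genpow lam mu pol k' i false * gen lam mu pol false j
          + genpow lam mu pol k' i true * gen lam mu pol true j
  end.

Definition trans_prob (lam mu : R) (pol : policy) (t : R) (i j : bool) : R :=
  Series (fun k => t ^ k / INR (fact k) * genpow lam mu pol k i j).

Definition avg_reward_is (lam mu Rs X eta : R) (pol : policy) (i : bool) (g : R) : Prop :=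
  is_lim
    (fun T => / T * RInt (fun t =>
        trans_prob lam mu pol t i false * rew lam mu Rs X eta pol false
      + trans_prob lam mu pol t i true * rew lam mu Rs X eta pol true) 0 T)
    p_infty (Finite g).

Definition optimal (lam mu Rs X eta : R) (pol : policy) : Prop :=
  forall i : bool, exists g : R,
    avg_reward_is lam mu Rs X eta pol i g /\
    forall (pol' : policy) (g' : R), avg_reward_is lam mu Rs X eta pol' i g' -> g' <= g.

Definition action_optimal (lam mu Rs X eta : R) (n a : bool) : Prop :=
  exists pol : policy, optimal lam mu Rs X eta pol /\ pol n = a.

Definition is_whittle_index (lam mu Rs X : R) (n : bool) (eta : R) : Prop :=
  action_optimal lam mu Rs X eta n true /\ action_optimal lam mu Rs X eta n false.

Definition whittle_indexable_with (lam mu Rs X : R) (idx : bool -> R) : Prop :=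
  forall n : bool,
    is_whittle_index lam mu Rs X n (idx n) /\
    (forall eta, eta < idx n -> action_optimal lam mu Rs X eta n true) /\
    (forall eta, idx n < eta -> action_optimal lam mu Rs X eta n false).

(* Under a stationary policy the chain has two states, leaving state 0 at rate a and state 1
   at rate b, so its generator satisfies Q^2 = -(a + b) Q and exp(tQ) = I + Q (1 - e^{-(a+b)t})/(a+b).
   Averaging over [0, T] and letting T -> oo gives the stationary gain (b r0 + a r1)/(a + b),
   independently of the initial state.  Only three gains occur: 0 (never admit), the gain of
   admitting only into the empty state, and the gain of always admitting; each is affine in eta,
   and the three pairwise indifference points eta_idle_single = lam X, eta_idle_pair and
   eta_single_pair are ordered according to the sign of 2X - R.  Reading off which policy is best
   on each interval of eta gives the indices. *)
From Stdlib Require Import Reals Lra Factorial.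
From Coquelicot Require Import Coquelicot.
Open Scope R_scope.

Lemma is_series_exp x : is_series (fun k => x ^ k / INR (fact k)) (exp x).
Proof.
  generalize (is_exp_Reals x); apply is_series_ext; intros n.
  rewrite pow_n_pow; reflexivity.
Qed.

Lemma b2r_ge0 b : 0 <= b2r b.
Proof. destruct b; simpl; lra. Qed.

Definition rate_sum (lam mu : R) (pol : policy) : R :=
  b2r (pol false) * lam + (b2r (pol true) * lam + mu).

Lemma rate_sum_gt0 lam mu pol : 0 < lam -> 0 < mu -> 0 < rate_sum lam mu pol.
Proof.
  intros Hlam Hmu; unfold rate_sum.
  pose proof (b2r_ge0 (pol false)); pose proof (b2r_ge0 (pol true)); nra.
Qed.

Section TransitionProbabilities.

Variables (lam mu : R) (pol : policy).

Let Q := gen lam mu pol.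
Let s := rate_sum lam mu pol.

Lemma gen_sqr i j : Q i false * Q false j + Q i true * Q true j = - s * Q i j.
Proof. unfold Q, s, rate_sum, gen; destruct i, j; simpl; ring. Qed.

Lemma genpow_S k i j : genpow lam mu pol (S k) i j = (- s) ^ k * Q i j.
Proof.
  revert j; induction k as [|k IHk]; intros j.
  - destruct i, j; simpl; unfold Q; ring.
  - change (genpow lam mu pol (S (S k)) i j) with
      (genpow lam mu pol (S k) i false * Q false j
       + genpow lam mu pol (S k) i true * Q true j).
    rewrite !IHk; simpl.
    transitivity ((- s) ^ k * (Q i false * Q false j + Q i true * Q true j)); [ring|].
    rewrite gen_sqr; ring.
Qed.

Lemma trans_prob_eq t i j : 0 < s ->
  trans_prob lam mu pol t i j =
  (if Bool.eqb i j then 1 else 0) + Q i j / s * (1 - exp (- s * t)).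
Proof.
  intros Hs; unfold trans_prob; apply is_series_unique, is_series_decr_1.
  apply (is_series_ext
           (fun k => scal (- (Q i j / s)) ((- s * t) ^ S k / INR (fact (S k))))).
  { intros n; rewrite genpow_S; change (scal ?c ?x) with (c * x).
    rewrite Rpow_mult_distr.
    generalize (INR_fact_neq_0 (S n)); generalize (INR (fact (S n))); intros F HF.
    simpl; field; lra. }
  replace (plus _ _) with (scal (- (Q i j / s)) (exp (- s * t) - 1)).
  2: { unfold plus, opp, scal; simpl; unfold mult, plus, opp; simpl.
       destruct (Bool.eqb i j); field; lra. }
  apply (@is_series_scal R_AbsRing R_NormedModule).
  apply (is_series_incr_1 (fun k => (- s * t) ^ k / INR (fact k))).
  replace (plus _ _) with (exp (- s * t)); [apply is_series_exp|].
  unfold plus; simpl; unfold plus; simpl; field.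
Qed.

End TransitionProbabilities.

Lemma RInt_relaxation c d s T : 0 < s ->
  RInt (fun t => c + d * (1 - exp (- s * t))) 0 T
  = (c + d) * T + d / s * (exp (- s * T) - 1).
Proof.
  intros Hs; apply is_RInt_unique.
  set (F := fun t => (c + d) * t + d / s * exp (- s * t)).
  replace ((c + d) * T + d / s * (exp (- s * T) - 1)) with (minus (F T) (F 0)).
  2: { unfold F, minus, plus, opp; simpl.
       replace (- s * 0) with 0 by ring; rewrite exp_0; field; lra. }
  apply (@is_RInt_derive R_CompleteNormedModule).
  - intros x _; unfold F; auto_derive; auto; field; lra.
  - intros x _; apply (@ex_derive_continuous R_AbsRing R_NormedModule); auto_derive; auto.
Qed.

Lemma is_lim_time_average_relaxation c d s : 0 < s ->
  is_lim (fun T => / T * RInt (fun t => c + d * (1 - exp (- s * t))) 0 T)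
    p_infty (c + d).
Proof.
  intros Hs; apply is_lim_spec; intros eps; simpl.
  pose proof (cond_pos eps) as He.
  exists (Rmax 1 (Rabs d / (s * eps))); intros T HT.
  assert (HT1 : 1 < T) by (eapply Rle_lt_trans; [apply Rmax_l | exact HT]).
  assert (Hd : Rabs d < s * eps * T).
  { assert (HT2 : Rabs d / (s * eps) < T)
      by (eapply Rle_lt_trans; [apply Rmax_r | exact HT]).
    apply (Rmult_lt_compat_l (s * eps)) in HT2; [|nra].
    replace (s * eps * (Rabs d / (s * eps))) with (Rabs d) in HT2 by (field; nra).
    exact HT2. }
  rewrite RInt_relaxation by lra.
  set (u := 1 - exp (- s * T)).
  assert (Hu : 0 <= u <= 1).
  { unfold u; pose proof (exp_pos (- s * T)).
    assert (exp (- s * T) <= 1) by (rewrite <- exp_0; left; apply exp_increasing; nra).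
    lra. }
  replace (exp (- s * T) - 1) with (- u) by (unfold u; ring).
  replace (/ T * ((c + d) * T + d / s * - u) - (c + d)) with (- (d * u) / (s * T))
    by (field; lra).
  rewrite Rabs_div, Rabs_Ropp, (Rabs_right (s * T)), Rabs_mult, (Rabs_right u) by nra.
  apply (Rmult_lt_reg_r (s * T)); [nra|].
  replace (Rabs d * u / (s * T) * (s * T)) with (Rabs d * u) by (field; nra).
  pose proof (Rabs_pos d); nra.
Qed.

(* The stationary law of the chain is (b, a)/(a + b), with a = x0 lam and b = x1 lam + mu. *)
Definition gain (lam mu Rs X eta : R) (x0 x1 : bool) : R :=
  ((b2r x1 * lam + mu) * (0 - eta * b2r x0)
   + b2r x0 * lam * (Rs * b2r x1 * lam + X * mu - eta * b2r x1))
  / (b2r x0 * lam + (b2r x1 * lam + mu)).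

Lemma avg_reward_is_gain lam mu Rs X eta pol i g : 0 < lam -> 0 < mu ->
  avg_reward_is lam mu Rs X eta pol i g <-> g = gain lam mu Rs X eta (pol false) (pol true).
Proof.
  intros Hlam Hmu.
  pose proof (rate_sum_gt0 lam mu pol Hlam Hmu) as Hs.
  set (s := rate_sum lam mu pol) in Hs.
  set (r0 := rew lam mu Rs X eta pol false).
  set (r1 := rew lam mu Rs X eta pol true).
  set (c := if i then r1 else r0).
  set (d := (gen lam mu pol i false * r0 + gen lam mu pol i true * r1) / s).
  assert (Hlim : is_lim (fun T => / T * RInt (fun t =>
      trans_prob lam mu pol t i false * r0 + trans_prob lam mu pol t i true * r1) 0 T)
      p_infty (c + d)).
  { eapply is_lim_ext; [|apply (is_lim_time_average_relaxation c d s Hs)].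
    intros T; simpl; f_equal; apply RInt_ext; intros t _.
    rewrite !trans_prob_eq by exact Hs; fold s.
    unfold c, d; destruct i; simpl; field; lra. }
  assert (Hgain : c + d = gain lam mu Rs X eta (pol false) (pol true)).
  { unfold c, d, r0, r1, gain, rew, gen; unfold s, rate_sum in *.
    destruct i; simpl; field; lra. }
  unfold avg_reward_is; fold r0 r1; rewrite <- Hgain; split.
  - intros H; apply is_lim_unique in H; apply is_lim_unique in Hlim.
    rewrite H in Hlim; injection Hlim; auto.
  - intros ->; exact Hlim.
Qed.

Lemma whittle_indexable_of lam mu Rs X (idx : bool -> R) :
  (forall n eta, eta <= idx n -> action_optimal lam mu Rs X eta n true) ->
  (forall n eta, idx n <= eta -> action_optimal lam mu Rs X eta n false) ->
  whittle_indexable_with lam mu Rs X idx.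
Proof.
  intros Hadmit Hidle n; repeat split; intros; try apply Hadmit; try apply Hidle; lra.
Qed.

Section Gains.

Variables (lam mu Rs X : R).
Hypotheses (Hlam : 0 < lam) (Hmu : 0 < mu).

Definition eta_idle_single : R := lam * X.
Definition eta_idle_pair : R := lam / (2 * lam + mu) * (lam * Rs + mu * X).
Definition eta_single_pair : R := lam / (2 * lam + mu) * ((lam + mu) * Rs - mu * X).

Lemma gain_idle eta x1 : gain lam mu Rs X eta false x1 = 0.
Proof. unfold gain; destruct x1; simpl; field; lra. Qed.

Lemma gain_single eta :
  gain lam mu Rs X eta true false = mu / (lam + mu) * (eta_idle_single - eta).
Proof. unfold gain, eta_idle_single; simpl; field; lra. Qed.

Lemma gain_pair eta : gain lam mu Rs X eta true true = eta_idle_pair - eta.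
Proof. unfold gain, eta_idle_pair; simpl; field; lra. Qed.

Lemma gain_pair_sub_single eta :
  gain lam mu Rs X eta true true - gain lam mu Rs X eta true false
  = lam / (lam + mu) * (eta_single_pair - eta).
Proof.
  rewrite gain_pair, gain_single; unfold eta_idle_pair, eta_idle_single, eta_single_pair.
  field; lra.
Qed.

Lemma eta_idle_single_sub_pair :
  eta_idle_single - eta_idle_pair = lam * lam / (2 * lam + mu) * (2 * X - Rs).
Proof. unfold eta_idle_single, eta_idle_pair; field; lra. Qed.

Lemma eta_idle_pair_sub_single_pair :
  eta_idle_pair - eta_single_pair = lam * mu / (2 * lam + mu) * (2 * X - Rs).
Proof. unfold eta_idle_pair, eta_single_pair; field; lra. Qed.

Lemma action_optimal_of_gain_max eta (pol : policy) n :
  (forall y0 y1, gain lam mu Rs X eta y0 y1 <= gain lam mu Rs X eta (pol false) (pol true)) ->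
  action_optimal lam mu Rs X eta n (pol n).
Proof.
  intros Hmax; exists pol; split; [|reflexivity].
  intros i; exists (gain lam mu Rs X eta (pol false) (pol true)); split.
  - apply avg_reward_is_gain; auto.
  - intros pol' g Hg; apply avg_reward_is_gain in Hg; auto; subst; apply Hmax.
Qed.

Lemma gain_le eta g :
  0 <= g -> gain lam mu Rs X eta true false <= g -> gain lam mu Rs X eta true true <= g ->
  forall y0 y1, gain lam mu Rs X eta y0 y1 <= g.
Proof. intros H0 Hsingle Hpair [|] [|]; rewrite ?gain_idle; auto. Qed.

Lemma pair_optimal eta n : eta <= eta_idle_pair -> eta <= eta_single_pair ->
  action_optimal lam mu Rs X eta n true.
Proof.
  intros Hip Hsp; apply (action_optimal_of_gain_max eta (fun _ => true) n).
  pose proof (gain_pair eta); pose proof (gain_pair_sub_single eta).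
  assert (0 <= lam / (lam + mu)) by (apply Rlt_le, Rdiv_lt_0_compat; lra).
  apply gain_le; nra.
Qed.

Lemma single_optimal eta n : eta_single_pair <= eta -> eta <= eta_idle_single ->
  action_optimal lam mu Rs X eta n (negb n).
Proof.
  intros Hsp His; apply (action_optimal_of_gain_max eta negb n).
  pose proof (gain_single eta); pose proof (gain_pair_sub_single eta).
  assert (0 <= lam / (lam + mu)) by (apply Rlt_le, Rdiv_lt_0_compat; lra).
  assert (0 <= mu / (lam + mu)) by (apply Rlt_le, Rdiv_lt_0_compat; lra).
  cbn [negb]; apply gain_le; nra.
Qed.

Lemma idle_optimal eta n : eta_idle_single <= eta -> eta_idle_pair <= eta ->
  action_optimal lam mu Rs X eta n false.
Proof.
  intros His Hip; apply (action_optimal_of_gain_max eta (fun _ => false) n).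
  pose proof (gain_single eta); pose proof (gain_pair eta).
  assert (0 <= mu / (lam + mu)) by (apply Rlt_le, Rdiv_lt_0_compat; lra).
  rewrite gain_idle; apply gain_le; nra.
Qed.

End Gains.

Theorem proposition1 (lam mu Rs Rbar C : R) :
  0 < lam -> 0 < mu -> 0 < Rs -> 0 < Rbar -> 0 <= C ->
  (Rs < 2 * (Rbar - C) ->
     whittle_indexable_with lam mu Rs (Rbar - C)
       (fun n => if n
                 then lam / (2 * lam + mu) * ((lam + mu) * Rs - mu * (Rbar - C))
                 else lam * (Rbar - C))) /\
  (2 * (Rbar - C) <= Rs ->
     whittle_indexable_with lam mu Rs (Rbar - C)
       (fun _ => lam / (2 * lam + mu) * (lam * Rs + mu * (Rbar - C)))).
Proof.
  intros Hlam Hmu _ _ _; generalize (Rbar - C); intros X.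
  pose proof (eta_idle_single_sub_pair lam mu Rs X Hlam Hmu) as Hisp.
  pose proof (eta_idle_pair_sub_single_pair lam mu Rs X Hlam Hmu) as Hipsp.
  assert (0 < lam * lam / (2 * lam + mu)) by (apply Rdiv_lt_0_compat; nra).
  assert (0 < lam * mu / (2 * lam + mu)) by (apply Rdiv_lt_0_compat; nra).
  split; intros HR.
  - change (whittle_indexable_with lam mu Rs X (fun n =>
      if n then eta_single_pair lam mu Rs X else eta_idle_single lam X)).
    apply whittle_indexable_of; intros [|] eta Heta.
    + apply pair_optimal; nra.
    + destruct (Rle_lt_dec eta (eta_single_pair lam mu Rs X)).
      * apply pair_optimal; nra.
      * apply (single_optimal _ _ _ _ Hlam Hmu _ false); lra.
    + destruct (Rle_lt_dec eta (eta_idle_single lam X)).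
      * apply (single_optimal _ _ _ _ Hlam Hmu _ true); lra.
      * apply idle_optimal; nra.
    + apply idle_optimal; nra.
  - change (whittle_indexable_with lam mu Rs X (fun _ => eta_idle_pair lam mu Rs X)).
    apply whittle_indexable_of; intros n eta Heta.
    + apply pair_optimal; nra.
    + apply idle_optimal; nra.
Qed.
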